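(* Let $\mathscr M$, $\mathscr N$ be modules over $\mathbb Z[\mathbb L]_{\mathrm{loc}}=\mathbb Z[\mathbb L,\mathbb L^{-1},(1-\mathbb L^n)^{-1}, n\ge1]$, and $\mathbf T=(T_1,\dots,T_r)$. If $a(\mathbf T)=\sum a_{\mathbf n}\mathbf T^{\mathbf n}\in\mathscr M[[\mathbf T]]_{\mathrm{int}}$ and $b(\mathbf T)=\sum b_{\mathbf n}\mathbf T^{\mathbf n}\in\mathscr N[[\mathbf T]]_{\mathrm{ssr}}$, then $a(\mathbf T)\otimes_{\mathscr H}b(\mathbf T):=\sum_{\mathbf n}a_{\mathbf n}\otimes b_{\mathbf n}\mathbf T^{\mathbf n}$ lies in $(\mathscr M\otimes_{\mathbb Z[\mathbb L]_{\mathrm{loc}}}\mathscr N)[[\mathbf T]]_{\mathrm{int}}$.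
   Context: For a module $\mathscr M$ over $\mathbb Z[\mathbb L,\mathbb L^{-1}]$, $\mathscr M[[\mathbf T]]_{\mathrm{ssr}}=\mathscr M[\mathbf T][(1-\mathbb L^m\mathbf T^{\mathbf n})^{-1}]_{m\in\mathbb Z_{\le0},\,\mathbf n\in\mathbb N^r\setminus\{0\}}$ (strongly rational series) and $\mathscr M[[\mathbf T]]_{\mathrm{int}}=\mathscr M[\mathbf T][(1-\mathbb L^m\mathbf T^{\mathbf n})^{-1}]_{m\in\mathbb Z_{<0},\,\mathbf n\in\mathbb N^r\setminus\{0\}}$ (integrable series), both regarded as submodules of $\mathscr M[[\mathbf T]]$ via $\frac1{1-\mathbb L^m\mathbf T^{\mathbf n}}=\sum_{l\ge0}(\mathbb L^m\mathbf T^{\mathbf n})^l$. *)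

From HB Require Import structures.
From mathcomp Require Import all_boot all_order all_algebra.
From mathcomp Require Import boolp.
From mathcomp Require Import ring.
Set Implicit Arguments. Unset Strict Implicit. Unset Printing Implicit Defensive.
Import GRing.Theory.
Local Open Scope ring_scope.

Definition QL := {fraction {poly int}}.
Local Notation "x %:F" := (@FracField.tofrac _ x).

Definition denom (k : nat) (s : seq nat) : {poly int} :=
  'X^k * \prod_(n <- s) (1 - 'X^n).

Definition is_zloc (x : QL) : Prop :=
  exists (k : nat) (s : seq nat) (p : {poly int}),
    all (fun n => 0 < n)%N s /\ (denom k s)%:F * x = p%:F.

Definition zloc_pred : {pred QL} := fun x => `[< is_zloc x >].

Lemma denomD k1 s1 k2 s2 : denom (k1 + k2) (s1 ++ s2) = denom k1 s1 * denom k2 s2.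
Proof. rewrite /denom exprD big_cat /=; ring. Qed.

Lemma zloc_subring_closed : subring_closed zloc_pred.
Proof.
split.
- apply/asboolP; exists 0%N, [::], 1; split => //.
  by rewrite /denom big_nil expr0 mulr1 mulr1.
- move=> x y /asboolP [k1 [s1 [p1 [H1 E1]]]] /asboolP [k2 [s2 [p2 [H2 E2]]]].
  apply/asboolP; exists (k1 + k2)%N, (s1 ++ s2), (denom k2 s2 * p1 - denom k1 s1 * p2).
  split; first by rewrite all_cat H1 H2.
  rewrite denomD; move: (denom k1 s1) (denom k2 s2) E1 E2 => D1 D2 E1 E2.
  rewrite !(tofracM, tofracB) -E1 -E2; ring.
- move=> x y /asboolP [k1 [s1 [p1 [H1 E1]]]] /asboolP [k2 [s2 [p2 [H2 E2]]]].
  apply/asboolP; exists (k1 + k2)%N, (s1 ++ s2), (p1 * p2).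
  split; first by rewrite all_cat H1 H2.
  rewrite denomD; move: (denom k1 s1) (denom k2 s2) E1 E2 => D1 D2 E1 E2.
  rewrite !tofracM -E1 -E2; ring.
Qed.

Record Zloc := ZLoc { zval : QL; zvalP : zval \in zloc_pred }.
HB.instance Definition _ := [isSub for zval].
HB.instance Definition _ := [Choice of Zloc by <:].
HB.instance Definition _ := GRing.isSubringClosed.Build _ zloc_pred zloc_subring_closed.
HB.instance Definition _ := [SubChoice_isSubComNzRing of Zloc by <:].


(** The element L = 'X of Z[L]_loc, and its integer powers L^m. *)
Definition Lq (m : int) : QL := ('X%:F) ^ m.

Lemma Lq_in (m : int) : Lq m \in zloc_pred.
Proof.
apply/asboolP; rewrite /Lq; case: m => k.
- exists 0%N, [::], ('X^k); split => //.
  by rewrite /denom big_nil expr0 mulr1 tofrac1 mul1r tofracXn.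
- exists k.+1, [::], 1; split => //.
  rewrite /denom big_nil mulr1 NegzE tofracXn tofrac1 -exprnN.
  rewrite divrr // unitfE expf_neq0 //.
  by rewrite tofrac_eq0 polyX_eq0.
Qed.

Definition Lpow (m : int) : Zloc := ZLoc (Lq_in m).

Definition mono (r : nat) := {ffun 'I_r -> nat}.
Definition msize r (n : mono r) : nat := (\sum_(i < r) n i)%N.
Definition mscale r (l : nat) (n : mono r) : mono r := [ffun i => (l * n i)%N].

(** Formal power series in T_1..T_r with coefficients in V are coefficient
    functions mono r -> V.  A series is a polynomial iff it has finite support. *)
Definition is_poly r (V : Type) (z : V) (f : mono r -> V) : Prop :=
  exists S : seq (mono r), forall n, n \notin S -> f n = z.

(** Cauchy product of a series g in Zloc[[T]] with a series f in V[[T]]: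
    (g f)_n = sum_{a <= n} g_a *: f_{n - a}. *)
Definition smul r (V : lmodType Zloc) (g : mono r -> Zloc) (f : mono r -> V)
  : mono r -> V := fun n =>
  \sum_(a : {ffun 'I_r -> 'I_(msize n).+1} | [forall i, (a i <= n i)%N])
     g [ffun i => nat_of_ord (a i)] *: f [ffun i => (n i - a i)%N].

(** The expansion of 1/(1 - L^m T^nv) = sum_{l >= 0} L^(m l) T^(l nv), for nv <> 0
    (a term T^(l nv) with nv <> 0 has l <= msize (l nv)). *)
Definition geom r (m : int) (nv : mono r) : mono r -> Zloc := fun e =>
  \sum_(l < (msize e).+1 | e == mscale l nv) Lpow (m * (l : nat)%:Z).

(** f lies in V[T][(1 - L^m T^nv)^{-1}]_{m allowed, nv <> 0}, viewed inside V[[T]]: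
    f = p * prod_i 1/(1 - L^{m_i} T^{nv_i}) with p a polynomial. *)
Definition ratser r (V : lmodType Zloc) (allowed : int -> bool)
    (f : mono r -> V) : Prop :=
  exists (p : mono r -> V) (s : seq (int * mono r)),
    is_poly 0 p /\
    all (fun mn => allowed mn.1 && (mn.2 != 0)) s /\
    forall n, f n = foldr (fun mn acc => smul (geom mn.1 mn.2) acc) p s n.

Definition is_int r (V : lmodType Zloc) (f : mono r -> V) : Prop :=
  ratser (fun m : int => m < 0) f.
Definition is_ssr r (V : lmodType Zloc) (f : mono r -> V) : Prop :=
  ratser (fun m : int => m <= 0) f.

Definition zlinear (U V : lmodType Zloc) (f : U -> V) : Prop :=
  forall (a : Zloc) (x y : U), f (a *: x + y) = a *: f x + f y.

Definition zbilinear (M N Q : lmodType Zloc) (t : M -> N -> Q) : Prop :=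
  (forall y, zlinear (fun x => t x y)) /\ (forall x, zlinear (t x)).

Definition is_tensor_product (M N P : lmodType Zloc) (t : M -> N -> P) : Prop :=
  zbilinear t /\
  forall (Q : lmodType Zloc) (beta : M -> N -> Q), zbilinear beta ->
    exists! phi : P -> Q, zlinear phi /\ forall x y, phi (t x y) = beta x y.

(* Every rational series is a finite sum of cones [c T^w / prod_i (1 - L^(m_i) T^(v_i))], and
   the Hadamard product of two cones is the restriction to the diagonal [n = n'] of the product
   cone in the variables [(T, T')], whose generators are those of the two factors.  The diagonal
   is cut out one hyperplane [n_e = n'_e] at a time, using the weight [psi = n_e - n'_e].  A
   generator of positive and one of negative weight are first replaced by powers [X], [Y] of
   opposite weights [+-ab]; then [1/((1-X)(1-Y)) = 1/((1-XY)(1-X)) + Y/((1-XY)(1-Y))] trades them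
   for the weight-zero generator [XY].  Once all weights have the same sign, only finitely many
   terms of the weighted generators meet the hyperplane.  A generator of positive weight involves
   [T], so it comes from the integrable factor and has [L]-exponent [< 0], hence so does [XY];
   likewise every generator surviving on the diagonal involves [T], so the restricted series is
   integrable. *)

From HB Require Import structures.
From mathcomp Require Import all_boot all_order all_algebra.
From mathcomp Require Import boolp.
From mathcomp Require Import ring zify.
Set Implicit Arguments. Unset Strict Implicit. Unset Printing Implicit Defensive.
Import GRing.Theory Order.TTheory Num.Theory.
Local Open Scope ring_scope.

Section MultiIndex.
Variable r : nat.
Implicit Types u v w n : mono r.

Definition msub n u : mono r := [ffun i => (n i - u i)%N].
Definition mle u n : bool := [forall i, (u i <= n i)%N].

Lemma mleP u n : reflect (forall i, (u i <= n i)%N) (mle u n).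
Proof. exact: forallP. Qed.

Lemma maddE u v i : (u + v) i = (u i + v i)%N.
Proof. by rewrite ffunE. Qed.

Lemma mle0m n : mle 0 n.
Proof. by apply/mleP => i; rewrite ffunE. Qed.

Lemma mle_addl u v : mle v (u + v).
Proof. by apply/mleP => i; rewrite maddE leq_addl. Qed.

Lemma mle_add u v n : mle (u + v) n = mle u n && mle v (msub n u).
Proof.
apply/mleP/andP => [H|[/mleP H1 /mleP H2] i].
  split; apply/mleP => i; have := H i; rewrite maddE ?ffunE; lia.
by have := H1 i; have := H2 i; rewrite maddE ?ffunE; lia.
Qed.

Lemma msubm0 n : msub n 0 = n.
Proof. by apply/ffunP => i; rewrite !ffunE subn0. Qed.

Lemma msubD n u v : msub n (u + v) = msub (msub n u) v.
Proof. by apply/ffunP => i; rewrite !ffunE subnDA. Qed.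

Lemma msubK n u : mle u n -> msub n u + u = n.
Proof. by move/mleP => H; apply/ffunP => i; rewrite maddE ffunE subnK. Qed.

Lemma maddK u v : msub (u + v) v = u.
Proof. by apply/ffunP => i; rewrite ffunE maddE addnK. Qed.

Lemma mscale0 v : mscale 0 v = 0.
Proof. by apply/ffunP => i; rewrite !ffunE. Qed.

Lemma mscalem0 l : mscale l (0 : mono r) = 0.
Proof. by apply/ffunP => i; rewrite !ffunE muln0. Qed.

Lemma mscaleS l v : mscale l.+1 v = v + mscale l v.
Proof. by apply/ffunP => i; rewrite maddE !ffunE mulSn. Qed.

Lemma mscaleD a b v : mscale (a + b) v = mscale a v + mscale b v.
Proof. by apply/ffunP => i; rewrite maddE !ffunE mulnDl. Qed.

Lemma mscaleM a b v : mscale (a * b) v = mscale a (mscale b v).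
Proof. by apply/ffunP => i; rewrite !ffunE mulnA. Qed.

Lemma mscale_eq0 l v : (mscale l v == 0) = (l == 0%N) || (v == 0).
Proof.
case: (posnP l) => [->|Hl] /=; first by rewrite mscale0 eqxx.
apply/eqP/eqP => [/ffunP E|->]; last exact: mscalem0.
by apply/ffunP => i; have /eqP := E i; rewrite !ffunE muln_eq0 gtn_eqF // => /eqP.
Qed.

Lemma madd_eq0 u v : (u + v == 0) = (u == 0) && (v == 0).
Proof.
apply/eqP/andP => [/ffunP E|[/eqP -> /eqP ->]]; rewrite ?addr0 //.
by split; apply/eqP/ffunP => i; have /eqP := E i;
  rewrite maddE ffunE addn_eq0 => /andP[/eqP ? /eqP ?].
Qed.

Lemma msizeD u v : msize (u + v) = (msize u + msize v)%N.
Proof. by rewrite /msize -big_split; apply: eq_bigr => i _; rewrite maddE. Qed.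

Lemma msize_mle u v : mle u v -> (msize u <= msize v)%N.
Proof. by move/mleP => H; apply: leq_sum => i _. Qed.

Lemma msize_mscale l v : msize (mscale l v) = (l * msize v)%N.
Proof. by rewrite /msize big_distrr; apply: eq_bigr => i _; rewrite ffunE. Qed.

Lemma msize_gt0 v : v != 0 -> (0 < msize v)%N.
Proof.
apply: contraNT; rewrite -leqNgt leqn0 /msize sum_nat_eq0 => /forallP H.
by apply/eqP/ffunP => i; rewrite ffunE; apply/eqP; have := H i.
Qed.

Lemma mle_mscale_msize l v n : v != 0 -> mle (mscale l v) n -> (l <= msize n)%N.
Proof.
move=> Hv /msize_mle; rewrite msize_mscale; apply: leq_trans.
by rewrite leq_pmulr // msize_gt0.
Qed.

Lemma msize_msub n u : mle u n -> msize (msub n u) = (msize n - msize u)%N.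
Proof. by move=> Hu; rewrite -{2}(msubK Hu) msizeD addnK. Qed.

Lemma leq_coord_msize n i : (n i <= msize n)%N.
Proof. by rewrite /msize (bigD1 i) //= leq_addr. Qed.

End MultiIndex.

Section NatSums.
Variable V : zmodType.
Implicit Types (F : nat -> V) (G : nat -> nat -> V).

Lemma big_nat_trunc F K B : (forall l, (K <= l)%N -> F l = 0) -> (K <= B)%N ->
  \sum_(0 <= l < B) F l = \sum_(0 <= l < K) F l.
Proof.
move=> H HK; rewrite (big_cat_nat _ (n := K)) //= [X in _ + X]big1_seq ?addr0 //.
by move=> i /andP[_]; rewrite mem_index_iota => /andP[/H ->].
Qed.

Lemma big_nat_trunc_eq F K B :
  (forall l, (K <= l)%N -> F l = 0) -> (forall l, (B <= l)%N -> F l = 0) ->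
  \sum_(0 <= l < B) F l = \sum_(0 <= l < K) F l.
Proof.
move=> HK HB; case: (leqP K B) => H; first exact: big_nat_trunc.
by symmetry; apply: big_nat_trunc => //; apply: ltnW.
Qed.

Lemma big_nat_mod_split F q B : (0 < q)%N -> (forall l, (B <= l)%N -> F l = 0) ->
  \sum_(0 <= l < B) F l = \sum_(0 <= j < q) \sum_(0 <= k < B) F (q * k + j)%N.
Proof.
move=> Hq HB; rewrite -(big_nat_trunc (B := q * B) HB) ?leq_pmull // exchange_big /=.
elim: B {HB} => [|B IH]; first by rewrite muln0 !big_geq.
rewrite big_nat_recr //= -IH mulnS addnC (big_cat_nat _ (n := q * B)) ?leq_addr //=.
congr (_ + _); rewrite -{1}[(q * B)%N]add0n big_addn addKn.
by apply: eq_bigr => i _; rewrite addnC.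
Qed.

Lemma big_nat_geq_shift F a B : (a <= B)%N -> (forall l, (B <= l)%N -> F l = 0) ->
  \sum_(0 <= l < B | (a <= l)%N) F l = \sum_(0 <= u < B) F (a + u)%N.
Proof.
move=> HaB HB; rewrite (big_cat_nat _ (n := a)) //= big1_seq ?add0r; last first.
  by move=> i /andP[Hi]; rewrite mem_index_iota => /andP[_]; rewrite ltnNge Hi.
rewrite big_nat_cond (eq_bigl (fun i => (a <= i < B)%N && true)); last first.
  by move=> i; rewrite andbT; case: (a <= i)%N; rewrite ?andbT ?andbF.
rewrite -big_nat_cond -{1}[a]add0n big_addn.
rewrite (big_nat_trunc (K := (B - a)%N) (B := B)) ?leq_subr //.
  by apply: eq_bigr => i _; rewrite addnC.
by move=> l Hl; apply: HB; lia.
Qed.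

Lemma big_nat_pair_split G B :
  (forall l1 l2, (B <= l1)%N || (B <= l2)%N -> G l1 l2 = 0) ->
  \sum_(0 <= l1 < B) \sum_(0 <= l2 < B) G l1 l2 =
  \sum_(0 <= k < B) \sum_(0 <= u < B) G (k + u)%N k +
  \sum_(0 <= k < B) \sum_(0 <= u < B) G k (k + 1 + u)%N.
Proof.
move=> H.
have Esplit l1 : (l1 < B)%N -> \sum_(0 <= l2 < B) G l1 l2 =
    \sum_(0 <= l2 < B | (l2 <= l1)%N) G l1 l2 + \sum_(0 <= u < B) G l1 (l1 + 1 + u)%N.
  move=> Hl1; rewrite (big_cat_nat _ (n := l1.+1)) //=; congr (_ + _).
    rewrite [RHS](big_cat_nat _ (n := l1.+1)) //= [X in _ = _ + X]big1_seq ?addr0.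
      rewrite big_nat_cond [RHS]big_nat_cond; apply: eq_bigl => i.
      by rewrite andbT ltnS; case: (i <= l1)%N.
    by move=> i /andP[Hi]; rewrite mem_index_iota => /andP[H2]; rewrite ltnNge Hi in H2.
  rewrite -[l1.+1]add0n big_addn.
  rewrite (big_nat_trunc (K := (B - l1.+1)%N) (B := B)) ?leq_subr //.
    by apply: eq_bigr => i _; congr (G _ _); lia.
  by move=> l Hl; apply: H; apply/orP; right; lia.
rewrite big_nat (eq_bigr _ (fun i Hi => Esplit i Hi)) -big_nat big_split /=.
congr (_ + _).
rewrite (eq_bigr (fun l1 => \sum_(0 <= l2 < B) if (l2 <= l1)%N then G l1 l2 else 0));
  last by move=> i _; rewrite big_mkcond.
rewrite exchange_big /= big_nat [RHS]big_nat; apply: eq_bigr => l2 /andP[_ Hl2].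
rewrite -big_mkcond /= big_nat_geq_shift //; first exact: ltnW.
by move=> l Hl; apply: H; rewrite Hl.
Qed.

End NatSums.

Lemma LpowD (a b : int) : Lpow (a + b) = Lpow a * Lpow b.
Proof. by apply: val_inj; rewrite /= /Lq expfzDr // tofrac_eq0 polyX_eq0. Qed.

Lemma Lpow0 : Lpow 0 = 1.
Proof. by apply: val_inj; rewrite /= /Lq expr0z. Qed.

Section Series.
Variables (r : nat) (V : lmodType Zloc).
Implicit Types (u v w n : mono r) (f g : mono r -> V).

(* [mshift m u f] is [L^m T^u f] and [sgeom m v f] is [f / (1 - L^m T^v)]; at [n] only the
   terms with [l <= msize n] of the geometric series can contribute. *)
Definition mshift (m : int) u f : mono r -> V :=
  fun n => if mle u n then Lpow m *: f (msub n u) else 0.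

Definition sgeom (m : int) v f : mono r -> V :=
  fun n => \sum_(0 <= l < (msize n).+1) mshift (m * l%:Z) (mscale l v) f n.

Definition smon w (c : V) : mono r -> V := fun n => if n == w then c else 0.

Lemma mshiftA m1 u1 m2 u2 f :
  mshift m1 u1 (mshift m2 u2 f) = mshift (m1 + m2) (u1 + u2) f.
Proof.
apply: funext => n; rewrite /mshift mle_add msubD.
case: (mle u1 n) => //=; case: (mle u2 _); last by rewrite scaler0.
by rewrite scalerA LpowD.
Qed.

Lemma mshift0 f : mshift 0 0 f = f.
Proof. by apply: funext => n; rewrite /mshift mle0m msubm0 Lpow0 scale1r. Qed.

Lemma mshiftD m u f g : mshift m u (f \+ g) = mshift m u f \+ mshift m u g.
Proof. by apply: funext => n; rewrite /mshift /=; case: ifP; rewrite ?scalerDr ?addr0. Qed.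

Lemma mshift_sum (I : Type) (s : seq I) (F : I -> mono r -> V) m u :
  mshift m u (fun n => \sum_(i <- s) F i n) = fun n => \sum_(i <- s) mshift m u (F i) n.
Proof.
apply: funext => n; rewrite /mshift; case: ifP => _; last by rewrite big1.
by rewrite scaler_sumr.
Qed.

Lemma mshift_smon m u w c : mshift m u (smon w c) = smon (w + u) (Lpow m *: c).
Proof.
apply: funext => n; rewrite /mshift /smon; case: ifP => Hu.
  case: (eqVneq (msub n u) w) => [<-|Hne]; first by rewrite msubK // eqxx.
  rewrite scaler0; case: eqP => // E; case/eqP: Hne; by rewrite E maddK.
by case: eqP => // E; move: Hu; rewrite E mle_addl.
Qed.

Lemma mshift_large m l v f n : v != 0 -> (msize n < l)%N -> mshift m (mscale l v) f n = 0.
Proof.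
move=> Hv Hl; rewrite /mshift; case: ifP => // /(mle_mscale_msize Hv) H.
by move: (leq_ltn_trans H Hl); rewrite ltnn.
Qed.

Lemma mshift2_large m l1 v1 l2 v2 f n : v1 != 0 -> v2 != 0 ->
  (msize n < l1)%N || (msize n < l2)%N ->
  mshift m (mscale l1 v1 + mscale l2 v2) f n = 0.
Proof.
move=> H1 H2 Hl; rewrite /mshift mle_add; case: ifP => // /andP[A B].
have := mle_mscale_msize H1 A; have := mle_mscale_msize H2 B.
by rewrite msize_msub // => Ha Hb; move: Hl; lia.
Qed.

Lemma sgeom_trunc m v f n B : v != 0 -> (msize n < B)%N ->
  sgeom m v f n = \sum_(0 <= l < B) mshift (m * l%:Z) (mscale l v) f n.
Proof.
move=> Hv HB; rewrite /sgeom (big_nat_trunc (K := (msize n).+1) (B := B)) //.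
by move=> l Hl; apply: mshift_large.
Qed.

Lemma sgeomD m v f g : sgeom m v (f \+ g) = sgeom m v f \+ sgeom m v g.
Proof.
apply: funext => n; rewrite /sgeom /= -big_split /=; apply: eq_bigr => l _.
by rewrite mshiftD.
Qed.

Lemma sgeom_sum (I : Type) (s : seq I) (F : I -> mono r -> V) m v :
  sgeom m v (fun n => \sum_(i <- s) F i n) = fun n => \sum_(i <- s) sgeom m v (F i) n.
Proof.
apply: funext => n; rewrite /sgeom exchange_big /=; apply: eq_bigr => l _.
by rewrite mshift_sum.
Qed.

Lemma mshift_sgeom mu u m v f n B : v != 0 -> (msize n < B)%N ->
  mshift mu u (sgeom m v f) n =
  \sum_(0 <= l < B) mshift (mu + m * l%:Z) (u + mscale l v) f n.
Proof.
move=> Hv HB; under eq_bigr do rewrite -mshiftA.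
rewrite {1}/mshift; case: ifP => Hu; last by rewrite big1 // => l _; rewrite /mshift Hu.
rewrite (@sgeom_trunc _ _ _ _ B Hv); last first.
  by apply: leq_ltn_trans HB; rewrite msize_msub // leq_subr.
by rewrite scaler_sumr; apply: eq_bigr => l _; rewrite [RHS]/mshift Hu.
Qed.

Lemma sgeom2E m1 v1 m2 v2 f n B : v1 != 0 -> v2 != 0 -> (msize n < B)%N ->
  sgeom m1 v1 (sgeom m2 v2 f) n = \sum_(0 <= l1 < B) \sum_(0 <= l2 < B)
     mshift (m1 * l1%:Z + m2 * l2%:Z) (mscale l1 v1 + mscale l2 v2) f n.
Proof.
move=> H1 H2 HB; rewrite (sgeom_trunc _ _ H1 HB); apply: eq_bigr => l1 _.
exact: mshift_sgeom.
Qed.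

Lemma sgeomC m1 v1 m2 v2 f : v1 != 0 -> v2 != 0 ->
  sgeom m1 v1 (sgeom m2 v2 f) = sgeom m2 v2 (sgeom m1 v1 f).
Proof.
move=> H1 H2; apply: funext => n.
rewrite (sgeom2E _ _ _ H1 H2 (ltnSn _)) (sgeom2E _ _ _ H2 H1 (ltnSn _)).
rewrite exchange_big /=; apply: eq_bigr => l1 _; apply: eq_bigr => l2 _.
by rewrite addrC [_ + mscale _ _]addrC.
Qed.

Lemma sgeom_mshift m v mu u f : v != 0 -> sgeom m v (mshift mu u f) = mshift mu u (sgeom m v f).
Proof.
move=> Hv; apply: funext => n; rewrite (mshift_sgeom _ _ _ _ Hv (ltnSn _)) /sgeom.
by apply: eq_bigr => l _; rewrite mshiftA addrC [_ + u]addrC.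
Qed.

End Series.

Section GeometricIdentities.
Variables (r : nat) (V : lmodType Zloc).
Implicit Types (u v w n : mono r) (f g : mono r -> V).

Lemma sgeom_mod m v f q : v != 0 -> (0 < q)%N ->
  sgeom m v f = fun n => \sum_(0 <= j < q)
    mshift (m * j%:Z) (mscale j v) (sgeom (m * q%:Z) (mscale q v) f) n.
Proof.
move=> Hv Hq; have Hqv : mscale q v != 0 by rewrite mscale_eq0 negb_or -lt0n Hq.
apply: funext => n; rewrite /sgeom (@big_nat_mod_split _ _ q _ Hq); last first.
  by move=> l Hl; apply: mshift_large.
apply: eq_bigr => j _; rewrite (mshift_sgeom _ _ _ _ Hqv (ltnSn _)).
apply: eq_bigr => k _; congr (mshift _ _ _ _); first lia.
by rewrite mscaleD -mscaleM mulnC addrC.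
Qed.

Lemma sgeom_pair m1 v1 m2 v2 f : v1 != 0 -> v2 != 0 ->
  sgeom m1 v1 (sgeom m2 v2 f) =
  sgeom (m1 + m2) (v1 + v2) (sgeom m1 v1 f)
  \+ mshift m2 v2 (sgeom (m1 + m2) (v1 + v2) (sgeom m2 v2 f)).
Proof.
move=> H1 H2; have H12 : v1 + v2 != 0 by rewrite madd_eq0 negb_and H1.
apply: funext => n /=.
rewrite (sgeom2E _ _ _ H1 H2 (ltnSn _)) (big_nat_pair_split (G := fun l1 l2 =>
  mshift (m1 * l1%:Z + m2 * l2%:Z) (mscale l1 v1 + mscale l2 v2) f n)); last first.
  by move=> l1 l2 Hl; apply: mshift2_large.
congr (_ + _).
  rewrite (sgeom2E _ _ _ H12 H1 (ltnSn _)); apply: eq_bigr => k _; apply: eq_bigr => u _.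
  congr (mshift _ _ _ _); first lia.
  by apply/ffunP => i; rewrite !(maddE, ffunE); ring.
rewrite (mshift_sgeom _ _ _ _ H12 (ltnSn _)); apply: eq_bigr => k _.
have Hm : (msize (msub n (v2 + mscale k (v1 + v2))%R) < (msize n).+1)%N.
  by rewrite ltnS; apply: leq_sum => i _; rewrite ffunE leq_subr.
have Esplit (j : nat) : mscale k v1 + mscale (k + 1 + j) v2 = v2 + mscale k (v1 + v2) + mscale j v2.
  by apply/ffunP => i; rewrite !(maddE, ffunE); ring.
under eq_bigr do rewrite Esplit.
rewrite [RHS]/mshift; case: ifP => Hc; last first.
  by rewrite big1 // => u _; rewrite /mshift mle_add Hc.
rewrite (sgeom_trunc _ _ H2 Hm) scaler_sumr; apply: eq_bigr => u _.
rewrite /mshift mle_add Hc /= -msubD; case: ifP => _; last by rewrite scaler0.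
by rewrite scalerA -LpowD; congr (Lpow _ *: f _); rewrite !PoszD; ring.
Qed.

Definition sfactor m v f : mono r -> V := fun n => f n - mshift m v f n.

Lemma sgeomK m v : v != 0 -> cancel (sfactor m v) (sgeom m v).
Proof.
move=> Hv f; apply: funext => n; rewrite /sgeom.
pose u l := mshift (m * l%:Z) (mscale l v) f n.
have Etel l : mshift (m * l%:Z) (mscale l v) (sfactor m v f) n = u l - u l.+1.
  rewrite /u; have -> : m * l.+1%:Z = m * l%:Z + m by rewrite -addn1 PoszD; ring.
  rewrite mscaleS [v + _]addrC -mshiftA /mshift /sfactor.
  by case: ifP => _; rewrite ?scalerBr ?subrr.
rewrite (eq_bigr _ (fun l _ => Etel l)); under eq_bigr do rewrite -opprB.
rewrite sumrN telescope_sumr // opprB.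
by rewrite /u (@mshift_large _ _ _ (msize n).+1) // mulr0 mscale0 mshift0 subr0.
Qed.

Lemma sfactor_poly m v f : is_poly 0 f -> is_poly 0 (sfactor m v f).
Proof.
move=> [S HS]; exists (S ++ map (fun x => x + v) S) => n.
rewrite mem_cat negb_or => /andP[H1 H2]; rewrite /sfactor HS // /mshift.
case: ifP => H; last by rewrite subrr.
rewrite HS ?scaler0 ?subrr //; apply: contra H2 => H3.
by apply/mapP; exists (msub n v) => //; rewrite msubK.
Qed.

End GeometricIdentities.

Section Cones.
Variables (r : nat) (V : lmodType Zloc).
Implicit Types (u v w n : mono r) (f h : mono r -> V) (s : seq (int * mono r)).

Definition sgeoms s f : mono r -> V := foldr (fun g acc => sgeom g.1 g.2 acc) f s.

Definition scone s w (c : V) : mono r -> V := sgeoms s (smon w c).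

Definition gens_nz s := all (fun g : int * mono r => g.2 != 0) s.

Lemma sgeoms_mshift s m u f : gens_nz s -> mshift m u (sgeoms s f) = sgeoms s (mshift m u f).
Proof. by elim: s => //= g s IH /andP[Hg Hs]; rewrite -IH // sgeom_mshift. Qed.

Lemma mshift_scone s m u w c : gens_nz s ->
  mshift m u (scone s w c) = scone s (w + u) (Lpow m *: c).
Proof. by move=> Hs; rewrite /scone sgeoms_mshift // mshift_smon. Qed.

Lemma sgeomsD s f h : sgeoms s (f \+ h) = sgeoms s f \+ sgeoms s h.
Proof. by elim: s => //= g s ->; rewrite sgeomD. Qed.

Lemma sgeoms_sum (I : Type) (xs : seq I) (F : I -> mono r -> V) s :
  sgeoms s (fun n => \sum_(i <- xs) F i n) = fun n => \sum_(i <- xs) sgeoms s (F i) n.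
Proof. by elim: s => //= g s ->; rewrite sgeom_sum. Qed.

Lemma sgeoms_rem s g f : gens_nz s -> g \in s -> sgeoms s f = sgeom g.1 g.2 (sgeoms (rem g s) f).
Proof.
elim: s => //= h s IH /andP[Hh Hs]; rewrite in_cons.
case: (eqVneq h g) => [->|Hne] //= Hg.
by rewrite IH // sgeomC //; move/allP: Hs; apply.
Qed.

Lemma sgeoms_perm s s' f : gens_nz s -> perm_eq s s' -> sgeoms s f = sgeoms s' f.
Proof.
elim: s s' => [|g s IH] s' Hs Hp.
  by rewrite perm_sym in Hp; move/perm_nilP: Hp => ->.
have Hs' : gens_nz s' by rewrite /gens_nz -(perm_all _ Hp).
have Hg : g \in s' by rewrite -(perm_mem Hp) mem_head.
rewrite (sgeoms_rem _ Hs' Hg) /=; congr (sgeom _ _ _).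
move: Hs => /andP[_ Hs]; apply: IH => //.
by rewrite -(perm_cons g); apply: perm_trans Hp (perm_to_rem Hg).
Qed.

Definition sfactors s f : mono r -> V := foldl (fun acc g => sfactor g.1 g.2 acc) f s.

Lemma sgeomsK s : gens_nz s -> cancel (sfactors s) (sgeoms s).
Proof.
rewrite /sfactors /sgeoms; elim: s => //= g s IH /andP[Hg Hs] f.
by rewrite IH // sgeomK.
Qed.

Lemma sfactors_poly s f : is_poly 0 f -> is_poly 0 (sfactors s f).
Proof. by elim: s f => //= g s IH f Hf; apply/IH/sfactor_poly. Qed.

Lemma geom_trunc m v e B : v != 0 -> (msize e < B)%N ->
  geom m v e = \sum_(0 <= l < B) if e == mscale l v then Lpow (m * l%:Z) else 0.
Proof.
move=> Hv HB.
rewrite /geom -(big_mkord (fun l => e == mscale l v) (fun l => Lpow (m * l%:Z))) big_mkcond /=.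
rewrite [RHS](big_nat_trunc (K := (msize e).+1)) // => l Hl.
case: eqP => // E; have := @mle_mscale_msize r l v e Hv; rewrite -E => H.
have : (l <= msize e)%N by apply: H; apply/mleP.
by rewrite leqNgt Hl.
Qed.

Lemma smul_geom m v f : v != 0 -> smul (geom m v) f = sgeom m v f.
Proof.
move=> Hv; apply: funext => n; rewrite /smul /sgeom.
set B := (msize n).+1.
pose ea (a : {ffun 'I_r -> 'I_B}) : mono r := [ffun i => nat_of_ord (a i)].
have Ea (a : {ffun 'I_r -> 'I_B}) : [forall i, a i <= n i]%N -> mle (ea a) n.
  by move=> /forallP H; apply/mleP => i; rewrite ffunE.
rewrite (eq_bigr (fun a => \sum_(0 <= l < B)
   (if ea a == mscale l v then Lpow (m * l%:Z) *: f (msub n (mscale l v)) else 0))); last first.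
  move=> a Ha; rewrite (@geom_trunc m v (ea a) B Hv); last by rewrite ltnS msize_mle // Ea.
  rewrite scaler_suml; apply: eq_bigr => l _; case: eqP => E; last by rewrite scale0r.
  congr (_ *: f _); apply/ffunP => i; rewrite !ffunE.
  by move/ffunP: E => /(_ i); rewrite !ffunE => <-.
rewrite exchange_big /=; apply: eq_bigr => l _; rewrite /mshift.
case: ifP => H; last by rewrite big1 // => a Ha; case: eqP => // E; move: H; rewrite -E Ea.
have Hle i : (mscale l v i < B)%N.
  by rewrite ltnS; apply: (leq_trans _ (leq_coord_msize n i)); move/mleP: H; apply.
pose a0 : {ffun 'I_r -> 'I_B} := [ffun i => inord (mscale l v i)].
have Ha0 : ea a0 = mscale l v by apply/ffunP => i; rewrite ffunE ffunE inordK.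
rewrite -big_mkcondr /= (big_pred1 a0) ?Ha0 ?eqxx // => a /=.
apply/andP/eqP => [[_ /eqP E]|->]; last first.
  split; last by rewrite Ha0.
  by apply/forallP => i; rewrite ffunE inordK //; move/mleP: H; apply.
apply/ffunP => i; apply: val_inj; move/ffunP: E => /(_ i).
by rewrite /= ffunE [a0 i]ffunE inordK // => ->.
Qed.

Lemma foldr_smul_geom s p : gens_nz s ->
  foldr (fun g acc => smul (geom g.1 g.2) acc) p s = sgeoms s p.
Proof. by elim: s => //= g s IH /andP[Hg Hs]; rewrite IH // smul_geom. Qed.

End Cones.

Section RationalSeries.
Variables (r : nat) (V : lmodType Zloc) (allowed : int -> bool).
Implicit Types (w n : mono r) (f h p : mono r -> V) (s : seq (int * mono r)).

Definition gens_allowed s := all (fun g : int * mono r => allowed g.1 && (g.2 != 0)) s.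

Lemma gens_allowed_nz s : gens_allowed s -> gens_nz s.
Proof. by move/allP => H; apply/allP => g /H /andP[]. Qed.

Lemma ratserE f :
  ratser allowed f <-> exists p s, [/\ is_poly 0 p, gens_allowed s & f = sgeoms s p].
Proof.
split => [[p [s [Hp [Hs Hf]]]]|[p [s [Hp Hs ->]]]]; exists p, s.
  by split => //; apply: funext => n; rewrite Hf foldr_smul_geom // gens_allowed_nz.
by split=> //; split=> // n; rewrite foldr_smul_geom // gens_allowed_nz.
Qed.

Lemma is_poly_add p1 p2 : is_poly 0 p1 -> is_poly 0 p2 -> is_poly 0 (p1 \+ p2).
Proof.
move=> [S1 H1] [S2 H2]; exists (S1 ++ S2) => n; rewrite mem_cat negb_or => /andP[A B].
by rewrite /= H1 // H2 // addr0.
Qed.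

(* Bring the two fractions to the common denominator of [s1 ++ s2]. *)
Lemma ratser_add f h : ratser allowed f -> ratser allowed h -> ratser allowed (f \+ h).
Proof.
move=> /ratserE [p1 [s1 [Hp1 Hs1 ->]]] /ratserE [p2 [s2 [Hp2 Hs2 ->]]].
have G1 := gens_allowed_nz Hs1; have G2 := gens_allowed_nz Hs2.
apply/ratserE; exists (sfactors s2 p1 \+ sfactors s1 p2), (s1 ++ s2); split.
- by apply: is_poly_add; apply: sfactors_poly.
- by rewrite /gens_allowed all_cat; apply/andP.
have E1 : sgeoms (s1 ++ s2) (sfactors s2 p1) = sgeoms s1 p1.
  by rewrite /sgeoms foldr_cat -/(sgeoms s2 _) sgeomsK.
have E2 : sgeoms (s1 ++ s2) (sfactors s1 p2) = sgeoms s2 p2.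
  have G12 : gens_nz (s1 ++ s2) by rewrite /gens_nz all_cat; apply/andP.
  rewrite (sgeoms_perm _ G12 (permEl (perm_catC s1 s2))).
  by rewrite /sgeoms foldr_cat -/(sgeoms s1 _) sgeomsK.
by rewrite sgeomsD E1 E2.
Qed.

Lemma ratser_scone s w (c : V) : gens_allowed s -> ratser allowed (scone s w c).
Proof.
move=> Hs; apply/ratserE; exists (smon w c), s; split => //.
by exists [:: w] => n; rewrite inE /smon => /negbTE ->.
Qed.

Lemma ratser_sum (I : eqType) (xs : seq I) (F : I -> mono r -> V) :
  (forall i, i \in xs -> ratser allowed (F i)) -> ratser allowed (fun n => \sum_(i <- xs) F i n).
Proof.
elim: xs => [|i xs IH] H.
  apply/ratserE; exists (fun _ => 0), [::]; split => //; last first.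
    by apply: funext => n; rewrite big_nil.
  by exists [::].
have -> : (fun n => \sum_(j <- i :: xs) F j n) = F i \+ (fun n => \sum_(j <- xs) F j n).
  by apply: funext => n; rewrite big_cons.
apply: ratser_add; first by apply: H; rewrite mem_head.
by apply: IH => j Hj; apply: H; rewrite inE Hj orbT.
Qed.

Lemma poly_smon_expansion p : is_poly 0 p ->
  exists U : seq (mono r), p = fun n => \sum_(w <- U) smon w (p w) n.
Proof.
move=> [S HS]; exists (undup S); apply: funext => n; rewrite /smon.
have HU := undup_uniq S; case: (boolP (n \in undup S)) => Hn.
  rewrite (big_rem n Hn) eqxx /= big1_seq ?addr0 // => w /andP[_ Hw].
  by case: (eqVneq n w) Hw => [<-|//]; rewrite mem_rem_uniqF.
rewrite big1_seq; first by rewrite HS // -mem_undup.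
by move=> w /andP[_ Hw]; case: (eqVneq n w) Hw => [<-|//]; rewrite (negbTE Hn).
Qed.

Lemma ratser_scone_expansion f : ratser allowed f ->
  exists s (c : mono r -> V) (U : seq (mono r)),
    gens_allowed s /\ f = fun n => \sum_(w <- U) scone s w (c w) n.
Proof.
move=> /ratserE [p [s [Hp Hs ->]]]; have [U EU] := poly_smon_expansion Hp.
by exists s, p, U; split => //; rewrite {1}EU sgeoms_sum.
Qed.

End RationalSeries.

Section ZLinear.
Variables (U W : lmodType Zloc) (f : U -> W).
Hypothesis Hf : zlinear f.

Lemma zlinear0 : f 0 = 0.
Proof.
have := Hf 1 0 0; rewrite !scale1r addr0 => /(congr1 (fun x => x - f 0)).
by rewrite /= subrr addrK => ->.
Qed.

Lemma zlinearD x y : f (x + y) = f x + f y.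
Proof. by have := Hf 1 x y; rewrite !scale1r. Qed.

Lemma zlinearZ a x : f (a *: x) = a *: f x.
Proof. by have := Hf a x 0; rewrite !addr0 zlinear0 addr0. Qed.

Lemma zlinear_sum (I : Type) (s : seq I) (F : I -> U) :
  f (\sum_(i <- s) F i) = \sum_(i <- s) f (F i).
Proof.
elim: s => [|i s IH]; first by rewrite !big_nil zlinear0.
by rewrite !big_cons zlinearD IH.
Qed.

End ZLinear.

Section PairedIndex.
Variable r : nat.
Implicit Types a b c d : mono r.

(* The multi-index [(a, b)] of [N^(r + r)]: [a] indexes [T], [b] the second copy [T']. *)
Definition mpair a b : mono (r + r) :=
  [ffun i => match split i with inl j => a j | inr j => b j end].

Lemma mpair_l a b j : mpair a b (lshift r j) = a j.
Proof. by rewrite ffunE (unsplitK (inl _ j)). Qed.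

Lemma mpair_r a b j : mpair a b (rshift r j) = b j.
Proof. by rewrite ffunE (unsplitK (inr _ j)). Qed.

Lemma mpair_eq a b c d : (mpair a b == mpair c d) = (a == c) && (b == d).
Proof.
apply/eqP/andP => [E|[/eqP -> /eqP ->]] //; split; apply/eqP/ffunP => j.
  by rewrite -(mpair_l a b) E mpair_l.
by rewrite -(mpair_r a b) E mpair_r.
Qed.

Lemma mpair0 : mpair 0 0 = 0.
Proof. by apply/ffunP => i; rewrite !ffunE; case: (split i) => j; rewrite ffunE. Qed.

Lemma mpair_eq0 a b : (mpair a b == 0) = (a == 0) && (b == 0).
Proof. by rewrite -mpair0 mpair_eq. Qed.

Lemma msub_mpair a b c d : msub (mpair a b) (mpair c d) = mpair (msub a c) (msub b d).
Proof. by apply/ffunP => i; rewrite !ffunE; case: (split i) => j; rewrite ffunE. Qed.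

Lemma mscale_mpair l a b : mscale l (mpair a b) = mpair (mscale l a) (mscale l b).
Proof. by apply/ffunP => i; rewrite !ffunE; case: (split i) => j; rewrite ffunE. Qed.

Lemma mle_mpair a b c d : mle (mpair a b) (mpair c d) = mle a c && mle b d.
Proof.
apply/mleP/andP => [H|[/mleP H1 /mleP H2] i].
  by split; apply/mleP => j; [have := H (lshift r j) | have := H (rshift r j)];
     rewrite ?mpair_l ?mpair_r.
by rewrite !ffunE; case: (split i) => j.
Qed.

Lemma msize_mpair a b : msize (mpair a b) = (msize a + msize b)%N.
Proof.
rewrite /msize big_split_ord /=.
by congr (_ + _)%N; apply: eq_bigr => j _; rewrite ?mpair_l ?mpair_r.
Qed.

Definition gen_left (g : int * mono r) := (g.1, mpair g.2 0).
Definition gen_right (g : int * mono r) := (g.1, mpair 0 g.2).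

End PairedIndex.

Section TensorCone.
Variables (r : nat) (M N P : lmodType Zloc) (t : M -> N -> P).
Hypothesis Ht : zbilinear t.
Implicit Types (w n : mono r) (s : seq (int * mono r)).

Let tl0 y : t 0 y = 0 := zlinear0 (Ht.1 y).
Let tr0 x : t x 0 = 0 := zlinear0 (Ht.2 x).

Lemma tensor_smon wA (cA : M) wB (cB : N) n n' :
  t (smon wA cA n) (smon wB cB n') = smon (mpair wA wB) (t cA cB) (mpair n n').
Proof. by rewrite /smon mpair_eq; case: (n == wA); case: (n' == wB). Qed.

Lemma tensor_smon_scone sB wA (cA : M) wB (cB : N) n n' : gens_nz sB ->
  t (smon wA cA n) (scone sB wB cB n') =
  scone (map (@gen_right r) sB) (mpair wA wB) (t cA cB) (mpair n n').
Proof.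
rewrite /scone; elim: sB n' => [|g sB IH] n' /=; first by rewrite tensor_smon.
move=> /andP[Hg Hs].
have Hg' : mpair 0 g.2 != 0 by rewrite mpair_eq0 negb_and Hg orbT.
set B := (msize n + msize n').+1.
rewrite (sgeom_trunc _ _ Hg (B := B)); last by rewrite ltnS leq_addl.
rewrite (sgeom_trunc _ _ Hg' (B := B)); last by rewrite msize_mpair.
rewrite (zlinear_sum (Ht.2 _)); apply: eq_bigr => l _.
rewrite /mshift mscale_mpair mscalem0 mle_mpair mle0m /=.
case: ifP => H; last exact: tr0.
by rewrite (zlinearZ (Ht.2 _)) msub_mpair msubm0 IH.
Qed.

Lemma tensor_scone sA sB wA (cA : M) wB (cB : N) n n' : gens_nz sA -> gens_nz sB ->
  t (scone sA wA cA n) (scone sB wB cB n') =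
  scone (map (@gen_left r) sA ++ map (@gen_right r) sB) (mpair wA wB) (t cA cB) (mpair n n').
Proof.
move=> HA HB; rewrite {1}/scone; elim: sA n HA => [|g sA IH] n /=.
  by move=> _; rewrite tensor_smon_scone.
move=> /andP[Hg Hs].
have Hg' : mpair g.2 0 != 0 by rewrite mpair_eq0 negb_and Hg.
set B := (msize n + msize n').+1.
rewrite (sgeom_trunc _ _ Hg (B := B)); last by rewrite ltnS leq_addr.
rewrite /scone /= (sgeom_trunc _ _ Hg' (B := B)); last by rewrite msize_mpair.
rewrite (zlinear_sum (Ht.1 _)); apply: eq_bigr => l _.
rewrite /mshift mscale_mpair mscalem0 mle_mpair mle0m andbT.
case: ifP => H; last exact: tl0.
by rewrite (zlinearZ (Ht.1 _)) msub_mpair msubm0 IH.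
Qed.

End TensorCone.

Section Balance.
Variables (r : nat) (V : lmodType Zloc).
Implicit Types (g : int * mono r) (s : seq (int * mono r)).

Definition gscale (q : nat) g : int * mono r := (g.1 * q%:Z, mscale q g.2).
Definition gadd g1 g2 : int * mono r := (g1.1 + g2.1, g1.2 + g2.2).

Lemma gscale_nz q g : (0 < q)%N -> g.2 != 0 -> (gscale q g).2 != 0.
Proof. by move=> Hq Hg; rewrite mscale_eq0 negb_or -lt0n Hq. Qed.

Lemma scone_cons g s w (c : V) : scone (g :: s) w c = sgeom g.1 g.2 (scone s w c).
Proof. by []. Qed.

(* Writing [X = x^q1], [Y = y^q2] for the generators [x = g1], [y = g2]:
   [1/((1 - x)(1 - y))
      = sum_(i < q1, j < q2) x^i y^j (1/((1 - XY)(1 - Y)) + X/((1 - XY)(1 - X)))]. *)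
Lemma scone_balance g1 g2 s w (c : V) q1 q2 :
  gens_nz (g1 :: g2 :: s) -> (0 < q1)%N -> (0 < q2)%N ->
  scone (g1 :: g2 :: s) w c = fun n => \sum_(0 <= i < q1) \sum_(0 <= j < q2)
    (scone (gadd (gscale q2 g2) (gscale q1 g1) :: gscale q2 g2 :: s)
       (w + (mscale i g1.2 + mscale j g2.2))
       (Lpow (g1.1 * i%:Z + g2.1 * j%:Z) *: c) n
   + scone (gadd (gscale q2 g2) (gscale q1 g1) :: gscale q1 g1 :: s)
       (w + (mscale i g1.2 + mscale j g2.2 + (gscale q1 g1).2))
       (Lpow (g1.1 * i%:Z + g2.1 * j%:Z + (gscale q1 g1).1) *: c) n).
Proof.
move=> /and3P[H1 H2 Hs] Hq1 Hq2.
have H1' := gscale_nz Hq1 H1; have H2' := gscale_nz Hq2 H2.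
have Hh : (gadd (gscale q2 g2) (gscale q1 g1)).2 != 0 by rewrite madd_eq0 negb_and H2'.
rewrite !scone_cons (sgeom_mod _ _ H1 Hq1) (sgeomC _ _ _ H1' H2) (sgeom_mod _ _ H2 Hq2).
rewrite (sgeom_pair _ _ _ H2' H1'); apply: funext => n; apply: eq_bigr => i _.
rewrite mshift_sum; apply: eq_bigr => j _.
rewrite mshiftA mshiftD /= mshiftA.
by rewrite -!sgeom_mshift // !mshift_scone.
Qed.

End Balance.

Section ConeSums.
Variables (r : nat) (V : lmodType Zloc) (good : int * mono r -> bool).
Hypothesis good_nz : forall g, good g -> g.2 != 0.
Implicit Types (K : pred (mono r)) (F G : mono r -> V) (s : seq (int * mono r)).

Definition good_in K s := all (fun g => good g && K g.2) s.

Definition cone_sum_on K F := exists L : seq (seq (int * mono r) * mono r * V),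
  all (fun d => good_in K d.1.1) L /\
  forall n, K n -> F n = \sum_(d <- L) scone d.1.1 d.1.2 d.2 n.

Lemma good_in_nz K s : good_in K s -> gens_nz s.
Proof. by move/allP => H; apply/allP => g /H /andP[/good_nz]. Qed.

Lemma good_in_rem K s g : good_in K s -> good_in K (rem g s).
Proof. by move/allP => H; apply/allP => h /mem_rem /H. Qed.

Lemma cone_sum_on_ext K F G : (forall n, K n -> F n = G n) -> cone_sum_on K G -> cone_sum_on K F.
Proof. by move=> E [L [HL HG]]; exists L; split => // n Hn; rewrite E // HG. Qed.

Lemma cone_sum_on_scone K s w c : good_in K s -> cone_sum_on K (scone s w c).
Proof. by move=> Hs; exists [:: (s, w, c)]; rewrite /= Hs; split => // n _; rewrite big_seq1. Qed.

Lemma cone_sum_on_add K F G : cone_sum_on K F -> cone_sum_on K G -> cone_sum_on K (F \+ G).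
Proof.
move=> [L1 [H1 E1]] [L2 [H2 E2]]; exists (L1 ++ L2); rewrite all_cat H1 H2.
by split => // n Hn; rewrite big_cat /= E1 // E2.
Qed.

Lemma cone_sum_on_sum (I : eqType) (xs : seq I) K (F : I -> mono r -> V) :
  (forall i, i \in xs -> cone_sum_on K (F i)) -> cone_sum_on K (fun n => \sum_(i <- xs) F i n).
Proof.
elim: xs => [|i xs IH] H; first by exists [::]; split => // n _; rewrite !big_nil.
apply: (cone_sum_on_ext (G := F i \+ (fun n => \sum_(j <- xs) F j n))).
  by move=> n _; rewrite big_cons.
apply: cone_sum_on_add; first by apply: H; rewrite mem_head.
by apply: IH => j Hj; apply: H; rewrite inE Hj orbT.
Qed.

Variable psi : mono r -> int.
Hypothesis psiD : forall x y, psi (x + y) = psi x + psi y.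

Lemma psi0 : psi 0 = 0.
Proof.
have := psiD 0 0; rewrite addr0 => /(congr1 (fun x => x - psi 0)).
by rewrite /= subrr addrK => ->.
Qed.

Lemma psi_msub n u : mle u n -> psi (msub n u) = psi n - psi u.
Proof. by move=> H; rewrite -{2}(msubK H) psiD addrK. Qed.

Lemma psi_mscale l v : psi (mscale l v) = l%:Z * psi v.
Proof.
elim: l => [|l IH]; first by rewrite mscale0 psi0 mul0r.
by rewrite mscaleS psiD IH -addn1 PoszD mulrDl mul1r addrC.
Qed.

Definition level K : pred (mono r) := fun x => (psi x == 0) && K x.

Lemma scone_eq0_below s w (c : V) n : gens_nz s -> all (fun g => 0 <= psi g.2) s ->
  psi n < psi w -> scone s w c n = 0.
Proof.
elim: s n => [|g s IH] n /=.
  by move=> _ _ Hn; rewrite /scone /= /smon; case: eqP Hn => // ->; rewrite ltxx.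
move=> /andP[Hg Hs] /andP[Hp Hps] Hn; rewrite /sgeom big1 // => l _.
rewrite /mshift; case: ifP => // H; rewrite IH ?scaler0 // psi_msub // psi_mscale.
by apply: le_lt_trans Hn; rewrite lerBlDr lerDl mulr_ge0.
Qed.

(* On the level set only the terms [g^l] with [l <= psi w / psi g] can contribute. *)
Lemma scone_level_expand s g w (c : V) n : gens_nz s -> all (fun g => 0 <= psi g.2) s ->
  g \in s -> 0 < psi g.2 -> psi n = 0 ->
  scone s w c n = \sum_(0 <= l < (absz (psi w)).+1)
    scone (rem g s) (w + mscale l g.2) (Lpow (g.1 * l%:Z) *: c) n.
Proof.
move=> Gs Hs Hg Hpos Hn; have Gs' : gens_nz (rem g s) by apply/allP => h /mem_rem/(allP Gs).
rewrite /scone (sgeoms_rem _ Gs Hg) -/(scone (rem g s) w c) /sgeom.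
rewrite (@big_nat_trunc_eq _ (fun l => mshift (g.1 * l%:Z) (mscale l g.2)
  (scone (rem g s) w c) n) (absz (psi w)).+1).
- by apply: eq_bigr => l _; rewrite mshift_scone.
- move=> l Hl; rewrite /mshift; case: ifP => // Hle.
  rewrite scone_eq0_below ?scaler0 //; first by apply/allP => h /mem_rem/(allP Hs).
  rewrite psi_msub // psi_mscale Hn sub0r.
  by move: Hl Hpos; case: (psi w) => k; case: (psi g.2) => // k'; nia.
- by move=> l Hl; apply: mshift_large => //; apply: (allP Gs).
Qed.

Lemma cone_sum_on_level_nonneg K s w (c : V) : good_in K s ->
  all (fun g => 0 <= psi g.2) s -> cone_sum_on (level K) (scone s w c).
Proof.
move: (leqnn (size s)); move: {2}(size s) => k.
elim: k s w c => [|k IH] s w c Hk Hs Hps.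
  by case: s Hk Hs Hps => // _ Hs _; apply: cone_sum_on_scone.
case: (boolP (has (fun g => psi g.2 != 0) s)) => [/hasP [g Hg Hg0]|Hh]; last first.
  apply: cone_sum_on_scone; apply/allP => g Hg; have /andP[-> HK] := allP Hs g Hg.
  by move/hasPn: Hh => /(_ g Hg); rewrite negbK /level /= HK andbT.
have Hpos : 0 < psi g.2 by rewrite lt_def Hg0 (allP Hps g Hg).
apply: (cone_sum_on_ext (G := fun n => \sum_(0 <= l < (absz (psi w)).+1)
  scone (rem g s) (w + mscale l g.2) (Lpow (g.1 * l%:Z) *: c) n)).
  by move=> n /andP[/eqP Hn _]; apply: scone_level_expand (good_in_nz Hs) Hps Hg Hpos Hn.
apply: cone_sum_on_sum => l _; apply: IH; last by apply/allP => h /mem_rem/(allP Hps).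
- by rewrite size_rem // -subn1 leq_subLR add1n.
- exact: good_in_rem.
Qed.

End ConeSums.

Section Hyperplane.
Variables (r : nat) (V : lmodType Zloc) (good : int * mono r -> bool).
Hypothesis good_nz : forall g, good g -> g.2 != 0.
Variable psi : mono r -> int.
Hypothesis psiD : forall x y, psi (x + y) = psi x + psi y.
Variable K : pred (mono r).
Hypothesis K_add : forall x y, K x -> K y -> K (x + y).
Hypothesis K_mscale : forall q x, K x -> K (mscale q x).
Hypothesis good_gscale : forall g q, good g -> (0 < q)%N -> good (gscale q g).
Hypothesis good_gadd : forall g1 g2, good g1 -> good g2 -> psi g1.2 < 0 -> 0 < psi g2.2 ->
  good (gadd g1 g2).
Implicit Types (s : seq (int * mono r)) (w : mono r) (c : V).

Lemma cone_sum_on_level_onesided s w c : good_in good K s ->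
  ~~ (has (fun g => 0 < psi g.2) s && has (fun g => psi g.2 < 0) s) ->
  cone_sum_on good (level psi K) (scone s w c).
Proof.
move=> Hs; rewrite negb_and => /orP[] /hasPn Hn; last first.
  by apply: cone_sum_on_level_nonneg => //; apply/allP => g /Hn; rewrite -leNgt.
have psiND x y : - psi (x + y) = - psi x + - psi y by rewrite psiD opprD.
have -> : level psi K = level (fun x => - psi x) K.
  by apply: funext => x; rewrite /level oppr_eq0.
apply: cone_sum_on_level_nonneg => //.
by apply/allP => g /Hn; rewrite oppr_ge0 -leNgt.
Qed.

Lemma cone_sum_on_level s w c : good_in good K s -> cone_sum_on good (level psi K) (scone s w c).
Proof.
move: (leqnn (count (fun g => psi g.2 != 0) s)); move: {2}(count _ s) => k.
elim: k s w c => [|k IH] s w c Hk Hs;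
  (case: (boolP (has (fun g => 0 < psi g.2) s && has (fun g => psi g.2 < 0) s));
   last exact: cone_sum_on_level_onesided);
  move=> /andP[/hasP [i Hi Hip] /hasP [j Hj Hjn]].
  have : has (fun g => psi g.2 != 0) s by apply/hasP; exists i => //; rewrite gt_eqF.
  by rewrite has_count; case: (count _ s) Hk.
have Hji : j \in rem i s by apply: rem_mem => //; apply: contraTneq Hjn => ->; rewrite -leNgt ltW.
set s' := rem j (rem i s).
have Hs' : good_in good K s' by do 2 apply: good_in_rem.
have /andP[Gi Ki] := allP Hs i Hi; have /andP[Gj Kj] := allP Hs j Hj.
have Es : scone s w c = scone (i :: j :: s') w c.
  rewrite /scone (sgeoms_rem _ (good_in_nz good_nz Hs) Hi).
  by rewrite (sgeoms_rem _ (good_in_nz good_nz (good_in_rem i Hs)) Hji).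
set a := absz (psi i.2); set b := absz (psi j.2).
have Ha : (0 < a)%N by rewrite absz_gt0 gt_eqF.
have Hb : (0 < b)%N by rewrite absz_gt0 lt_eqF.
have Ea : psi i.2 = a%:Z by rewrite /a gtz0_abs.
have Eb : psi j.2 = - b%:Z by rewrite /b ltz0_abs // opprK.
have Pbi : psi (gscale b i).2 = (a * b)%N%:Z by rewrite psi_mscale // Ea -PoszM mulnC.
have Paj : psi (gscale a j).2 = - (a * b)%N%:Z by rewrite psi_mscale // Eb mulrN -PoszM.
have Hab : (0 < a * b)%N by rewrite muln_gt0 Ha Hb.
have Gh : good (gadd (gscale a j) (gscale b i)).
  by apply: good_gadd; rewrite ?good_gscale // ?Paj ?Pbi ?oppr_lt0 ltz_nat.
have Ph : psi (gadd (gscale a j) (gscale b i)).2 = 0 by rewrite psiD Paj Pbi addNr.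
have Kh : K (gadd (gscale a j) (gscale b i)).2 by apply: K_add; apply: K_mscale.
have Hc : count (fun g => psi g.2 != 0) s = (count (fun g => psi g.2 != 0) s').+2.
  by rewrite (permP (perm_to_rem Hi)) /= (permP (perm_to_rem Hji)) /= gt_eqF // lt_eqF.
have Gl : gens_nz (i :: j :: s') by rewrite /= !good_nz // (good_in_nz good_nz Hs').
rewrite Es (scone_balance _ _ Gl Hb Ha).
apply: cone_sum_on_sum => rho _; apply: cone_sum_on_sum => sig _.
apply: (cone_sum_on_add (F := scone _ _ _)); apply: IH.
- by move: Hk; rewrite Hc /= Ph Paj eqxx oppr_eq0 -lt0n Hab.
- by rewrite /= Gh Kh good_gscale //= K_mscale // Hs'.
- by move: Hk; rewrite Hc /= Ph Pbi eqxx -lt0n Hab.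
- by rewrite /= Gh Kh good_gscale //= K_mscale // Hs'.
Qed.

Lemma cone_sum_on_restrict_level (F : mono r -> V) :
  cone_sum_on good K F -> cone_sum_on good (level psi K) F.
Proof.
move=> [L [HL HF]].
apply: (cone_sum_on_ext (G := fun n => \sum_(d <- L) scone d.1.1 d.1.2 d.2 n)).
  by move=> n /andP[_ Hn]; apply: HF.
by apply: cone_sum_on_sum => d Hd; apply: cone_sum_on_level; apply: (allP HL).
Qed.

End Hyperplane.

Section Diagonal.
Variable r : nat.
Implicit Types (x v : mono (r + r)) (g : int * mono (r + r)) (D : seq 'I_r).

Definition wdiff (e : 'I_r) x : int := (x (lshift r e))%:Z - (x (rshift r e))%:Z.

Lemma wdiffD e x y : wdiff e (x + y) = wdiff e x + wdiff e y.
Proof. by rewrite /wdiff !maddE !PoszD; ring. Qed.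

Lemma wdiff_mscale e q x : wdiff e (mscale q x) = q%:Z * wdiff e x.
Proof. by rewrite /wdiff !ffunE !PoszM mulrBr. Qed.

Definition right_only v := [forall j : 'I_r, v (lshift r j) == 0%N].

(* The generators of the product of an integrable and a strongly rational cone:
   [L]-exponent [< 0], or [<= 0] for a generator involving only [T']. *)
Definition tensor_gen g := (g.2 != 0) && ((g.1 < 0) || ((g.1 <= 0) && right_only g.2)).

Lemma tensor_gen_nz g : tensor_gen g -> g.2 != 0.
Proof. by case/andP. Qed.

Lemma tensor_gen_gscale g q : tensor_gen g -> (0 < q)%N -> tensor_gen (gscale q g).
Proof.
move=> /andP[Hv Hm] Hq; rewrite /tensor_gen /= gscale_nz //=.
case/orP: Hm => [Hm|/andP[Hm Hp]]; first by rewrite pmulr_llt0 ?ltz_nat ?Hm.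
apply/orP; right; apply/andP; split; first by rewrite pmulr_lle0 ?ltz_nat.
by apply/forallP => j; rewrite ffunE (eqP (forallP Hp j)) muln0.
Qed.

(* A generator of positive weight has a [T]-component, hence comes from the integrable side. *)
Lemma tensor_gen_gadd e g1 g2 : tensor_gen g1 -> tensor_gen g2 ->
  wdiff e g1.2 < 0 -> 0 < wdiff e g2.2 -> tensor_gen (gadd g1 g2).
Proof.
move=> /andP[H1v H1m] /andP[H2v H2m] _ H2p.
have Hm1 : g1.1 <= 0 by case/orP: H1m => [/ltW|/andP[]].
have Hm2 : g2.1 < 0.
  case/orP: H2m => // /andP[_ /forallP /(_ e) /eqP E].
  by move: H2p; rewrite /wdiff E subr_gt0 ltNge.
rewrite /tensor_gen madd_eq0 negb_and H2v orbT /=.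
by apply/orP; left; apply: ler_ltD Hm1 Hm2.
Qed.

Definition diag_on D : pred (mono (r + r)) := fun x => all (fun e => wdiff e x == 0) D.

Lemma cone_sum_on_diag (P : lmodType Zloc) D (F : mono (r + r) -> P) :
  cone_sum_on tensor_gen (diag_on [::]) F -> cone_sum_on tensor_gen (diag_on D) F.
Proof.
elim: D => // e D IH /IH HD; apply: (cone_sum_on_restrict_level tensor_gen_nz (wdiffD e)) => //.
- move=> x y /allP Hx /allP Hy; apply/allP => e' He'.
  by rewrite wdiffD (eqP (Hx e' He')) (eqP (Hy e' He')) addr0.
- move=> q x /allP Hx; apply/allP => e' He'.
  by rewrite wdiff_mscale (eqP (Hx e' He')) mulr0.
- exact: tensor_gen_gscale.
- exact: tensor_gen_gadd.
Qed.

Definition mdiag v := [forall j : 'I_r, v (lshift r j) == v (rshift r j)].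
Definition mleft v : mono r := [ffun j => v (lshift r j)].
Definition gleft g : int * mono r := (g.1, mleft g.2).

Lemma mdiag_mpair v : mdiag v -> v = mpair (mleft v) (mleft v).
Proof.
move=> /forallP H; apply/ffunP => i; rewrite ffunE -{1}(splitK i).
by case: (split i) => j /=; rewrite ffunE // (eqP (H j)).
Qed.

Lemma mdiag_mpairxx (n : mono r) : mdiag (mpair n n).
Proof. by apply/forallP => j; rewrite mpair_l mpair_r. Qed.

Lemma diag_on_enum v : diag_on (enum 'I_r) v -> mdiag v.
Proof.
move=> /allP H; apply/forallP => j; have := H j; rewrite mem_enum => /(_ isT).
by rewrite /wdiff subr_eq0 => /eqP [->].
Qed.

Lemma diag_on_mpairxx (n : mono r) : diag_on (enum 'I_r) (mpair n n).
Proof. by apply/allP => e _; rewrite /wdiff mpair_l mpair_r subrr. Qed.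

Lemma mleft_eq0 v : mdiag v -> (mleft v == 0) = (v == 0).
Proof. by move=> Hd; rewrite {2}(mdiag_mpair Hd) mpair_eq0 andbb. Qed.

(* A diagonal generator involves [T], so it cannot be a [T']-only generator of exponent [0]. *)
Lemma tensor_gen_diag_lt0 g : tensor_gen g -> mdiag g.2 -> g.1 < 0.
Proof.
move=> /andP[Hv Hm] Hd; case/orP: Hm => // /andP[_ /forallP Hp].
case/eqP: Hv; rewrite (mdiag_mpair Hd); apply/ffunP => i; rewrite !ffunE.
by case: (split i) => j; rewrite ffunE (eqP (Hp j)).
Qed.

Lemma scone_diag (P : lmodType Zloc) s w (c : P) (n : mono r) :
  all (fun g => mdiag g.2) s -> gens_nz s ->
  scone s w c (mpair n n) = if mdiag w then scone (map gleft s) (mleft w) c n else 0.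
Proof.
elim: s n => [|g s IH] n /=.
  move=> _ _; rewrite /scone /= /smon; case: (boolP (mdiag w)) => Hw.
    by rewrite {1}(mdiag_mpair Hw) mpair_eq andbb.
  by case: eqP => // E; move: Hw; rewrite -E mdiag_mpairxx.
move=> /andP[Hg Hs] /andP[Hv Hn].
have Hu : mleft g.2 != 0 by rewrite mleft_eq0.
set B := (msize n + msize n).+1.
rewrite (sgeom_trunc _ _ Hv (B := B)) ?msize_mpair //.
have E l : mshift (g.1 * l%:Z) (mscale l g.2) (scone s w c) (mpair n n) =
   if mdiag w then mshift (g.1 * l%:Z) (mscale l (mleft g.2)) (scone (map gleft s) (mleft w) c) n
   else 0.
  rewrite /mshift {1 2}(mdiag_mpair Hg) mscale_mpair mle_mpair andbb msub_mpair.
  by case: ifP => H; [rewrite IH //; case: ifP; rewrite ?scaler0 | case: ifP].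
rewrite (eq_bigr _ (fun l _ => E l)); case: ifP => Hw; last by rewrite big1.
by rewrite (sgeom_trunc _ _ Hu (B := B)) // ltnS leq_addr.
Qed.

End Diagonal.

Lemma diag_tensor_scone_int r (P : lmodType Zloc) s w (c : P) :
  all (@tensor_gen r) s -> is_int (fun n => scone s w c (mpair n n)).
Proof.
move=> Hs; have [L [HL HF]] : cone_sum_on (@tensor_gen r) (diag_on (enum 'I_r)) (scone s w c).
  by apply/cone_sum_on_diag/cone_sum_on_scone; apply/allP => g /(allP Hs) ->.
have gens_diag d : d \in L -> all (fun g => mdiag g.2) d.1.1.
  by move=> Hd; apply/allP => g /(allP (allP HL d Hd)) /andP[_ /diag_on_enum].
have -> : (fun n => scone s w c (mpair n n)) = fun n =>
    \sum_(d <- [seq d <- L | mdiag d.1.2]) scone (map (@gleft r) d.1.1) (mleft d.1.2) d.2 n.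
  apply: funext => n; rewrite HF ?diag_on_mpairxx // big_filter [RHS]big_mkcond.
  rewrite big_seq [RHS]big_seq; apply: eq_bigr => d Hd; rewrite scone_diag ?gens_diag //.
  by apply: (good_in_nz (@tensor_gen_nz r)); apply: (allP HL).
apply: ratser_sum => d; rewrite mem_filter => /andP[_ Hd]; apply: ratser_scone.
apply/allP => _ /mapP [g Hg ->] /=.
have /andP[Gg _] := allP (allP HL d Hd) g Hg; have Dg := allP (gens_diag d Hd) g Hg.
by rewrite tensor_gen_diag_lt0 // mleft_eq0 // tensor_gen_nz.
Qed.

Lemma hadamard_scone_int r (M N P : lmodType Zloc) (t : M -> N -> P) sA sB wA (cA : M) wB (cB : N) :
  zbilinear t ->
  gens_allowed (fun m : int => m < 0) sA -> gens_allowed (fun m : int => m <= 0) sB ->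
  is_int (fun n : mono r => t (scone sA wA cA n) (scone sB wB cB n)).
Proof.
move=> Ht HA HB.
have -> : (fun n => t (scone sA wA cA n) (scone sB wB cB n)) = fun n =>
    scone (map (@gen_left r) sA ++ map (@gen_right r) sB) (mpair wA wB) (t cA cB) (mpair n n).
  apply: funext => n; apply: (tensor_scone Ht).
    exact: gens_allowed_nz HA.
  exact: gens_allowed_nz HB.
apply: diag_tensor_scone_int; rewrite all_cat !all_map.
apply/andP; split; apply/allP => g Hg; rewrite /tensor_gen /= mpair_eq0 negb_and.
  by have /andP[-> ->] := allP HA g Hg.
have /andP[Hm ->] := allP HB g Hg; rewrite orbT Hm /=.
by apply/orP; right; apply/forallP => j; rewrite mpair_l ffunE.
Qed.

Theorem lemma5p1 (r : nat) (M N P : lmodType Zloc) (t : M -> N -> P)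
    (Ht : is_tensor_product t) (a : mono r -> M) (b : mono r -> N) :
  is_int a -> is_ssr b -> is_int (fun n => t (a n) (b n)).
Proof.
move=> /ratser_scone_expansion [sA [cA [UA [HsA ->]]]].
move=> /ratser_scone_expansion [sB [cB [UB [HsB ->]]]].
have [[Htl Htr] _] := Ht.
have -> : (fun n => t (\sum_(wA <- UA) scone sA wA (cA wA) n)
                     (\sum_(wB <- UB) scone sB wB (cB wB) n)) =
    fun n => \sum_(wA <- UA) \sum_(wB <- UB) t (scone sA wA (cA wA) n) (scone sB wB (cB wB) n).
  apply: funext => n; rewrite (zlinear_sum (Htl _)); apply: eq_bigr => wA _.
  exact: (zlinear_sum (Htr _)).
apply: ratser_sum => wA _; apply: ratser_sum => wB _.
exact: hadamard_scone_int Ht.1 HsA HsB.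
Qed.
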